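(* Let $q$ be a prime power, let $d+1$ be a divisor of $q-1$, and let $f:\mathbb{F}_q\to\mathbb{F}_q$ be $(d+1)$-divisible and differentially $d$-uniform. Then $f$ is almost-$(d+1)$-to-1.
   Context: For a divisor $k$ of $q-1$, $f$ is $k$-divisible if $f(x)=f'(x^k)$ for some map $f':\mathbb{F}_q\to\mathbb{F}_q$. $f$ is differentially $d$-uniform if $d=\max_{a\neq 0,\,b\in\mathbb{F}_q}|\{x\in\mathbb{F}_q: f(x+a)-f(x)=b\}|$. $f$ is almost-$k$-to-1 if there is a unique element of $\mathrm{Im}(f)$ with exactly one preimage and every other element of $\mathrm{Im}(f)$ has exactly $k$ preimages. *)

From HB Require Import structures.
From mathcomp Require Import all_boot all_order all_algebra all_field.
Set Implicit Arguments. Unset Strict Implicit. Unset Printing Implicit Defensive.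
Import GRing.Theory.
Local Open Scope ring_scope.

Definition divisible (F : finFieldType) (k : nat) (f : F -> F) : Prop :=
  exists f' : F -> F, forall x : F, f x = f' (x ^+ k).

Definition delta_count (F : finFieldType) (f : F -> F) (a b : F) : nat :=
  #|[set x : F | f (x + a) - f x == b]|.

Definition diff_uniformity (F : finFieldType) (f : F -> F) : nat :=
  \max_(a : F | a != 0 :> F) \max_(b : F) delta_count f a b.

Definition diff_uniform (F : finFieldType) (d : nat) (f : F -> F) : Prop :=
  diff_uniformity f = d.

Definition npreim (F : finFieldType) (f : F -> F) (y : F) : nat :=
  #|[set x : F | f x == y]|.

Definition almost_k_to_1 (F : finFieldType) (k : nat) (f : F -> F) : Prop :=
  exists y0 : F,
    [/\ y0 \in codom f, npreim f y0 = 1%N,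
        (forall y, y \in codom f -> npreim f y = 1%N -> y = y0) &
        (forall y, y \in codom f -> y != y0 -> npreim f y = k)].

From mathcomp Require Import all_boot all_order all_algebra all_field.
From mathcomp Require Import cyclic.
Set Implicit Arguments. Unset Strict Implicit. Unset Printing Implicit Defensive.
Import GRing.Theory.
Local Open Scope ring_scope.

(* A (d+1)-divisible, differentially d-uniform map f on F = F_q is
   almost-(d+1)-to-1.  Write n(x) = npreim f (f x) for the size of the fibre
   of f through x.  The proof is a double count of the collision pairs
   (x, a) with a != 0 and f (x + a) = f x:
   - counted along x, there are n(x) - 1 of them for each x;
   - counted along a, they are the solutions of f (x + a) - f x = 0, hence at
     most d for each of the q - 1 nonzero shifts a.
   On the other hand, if z is a primitive (d+1)-th root of unity, then
   x, z x, ..., z^d x are d + 1 distinct points of the fibre of each x != 0,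
   so n(x) - 1 >= d there.  The two bounds force n(x) = d + 1 for x != 0
   and n(0) = 1; since d >= 1, this is exactly the almost-(d+1)-to-1
   property with exceptional value f 0.
   The file first proves the fibre bounds for arbitrary maps on a finite
   field, then the counting argument, and finally the theorem. *)

Section FibreCounting.

Variables (F : finFieldType) (f : F -> F).

Lemma npreim_collisions (x : F) :
  npreim f (f x) = (\sum_(a : F | a != 0%R) (f (x + a)%R == f x)).+1.
Proof.
rewrite /npreim -sum1_card big_mkcond /= (reindex_inj (addrI x)) /=.
rewrite (bigD1 0) //= addr0 inE eqxx add1n; congr _.+1.
by apply: eq_bigr => a _; rewrite inE.
Qed.

Lemma sum_collisions :
  (\sum_(x : F) \sum_(a : F | a != 0%R) (f (x + a)%R == f x))%N =
  (\sum_(a : F | a != 0%R) delta_count f a 0%R)%N.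
Proof.
rewrite exchange_big /=; apply: eq_bigr => a _.
rewrite /delta_count -sum1_card [RHS]big_mkcond /=.
by apply: eq_bigr => x _; rewrite inE subr_eq0.
Qed.

Lemma delta_count_le_uniformity (a b : F) :
  a != 0 -> (delta_count f a b <= diff_uniformity f)%N.
Proof.
move=> a_nz; rewrite /diff_uniformity.
apply: leq_trans (leq_bigmax_cond (F := fun a => \max_(b : F) delta_count f a b) a a_nz).
exact: (@leq_bigmax _ (fun b => delta_count f a b) b).
Qed.

(* The equation f (x + 1) - f x = b has a solution for a suitable b, so the
   differential uniformity of any map is positive. *)
Lemma diff_uniformity_gt0 : (0 < diff_uniformity f)%N.
Proof.
apply: leq_trans (delta_count_le_uniformity (f (0 + 1) - f 0) (oner_neq0 F)).
by rewrite /delta_count card_gt0; apply/set0Pn; exists 0; rewrite inE.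
Qed.

Lemma fibre_sizes_of_bounds (d : nat) :
  (forall a : F, a != 0 -> (delta_count f a 0%R <= d)%N) ->
  (forall x : F, x != 0 -> (d.+1 <= npreim f (f x))%N) ->
  forall x : F, npreim f (f x) = (if x != 0%R then d else 0%N).+1.
Proof.
move=> shift_le fibre_ge.
pose m x := (\sum_(a : F | a != 0%R) (f (x + a)%R == f x))%N.
pose g (x : F) := if x != 0 then d else 0%N.
have g_le_m x : (g x <= m x)%N.
  by rewrite /g; case: ifP => // x_nz; rewrite -ltnS -npreim_collisions fibre_ge.
have sum_m_le : (\sum_x m x <= \sum_x g x)%N.
  rewrite sum_collisions [X in (_ <= X)%N]big_mkcond /= big_mkcond /=.
  by apply: leq_sum => a _; rewrite /g; case: ifP => // /shift_le.
have /forallP m_eq_g : [forall x, g x == m x].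
  have sum_g_le_m := @leqif_sum F predT (fun x => g x == m x) g m
    (fun x _ => leqif_eq (g_le_m x)).
  by rewrite -sum_g_le_m.2 eqn_leq sum_g_le_m.1 sum_m_le.
by move=> x; rewrite npreim_collisions -/(m x) -(eqP (m_eq_g x)).
Qed.

End FibreCounting.

(* A finite field contains a primitive k-th root of unity for every divisor k
   of #|F| - 1: the #|F| - 1 nonzero elements are distinct roots of
   X^(#|F|-1) - 1, so one of them is a primitive (#|F|-1)-th root, and a
   suitable power of it is a primitive k-th root. *)
Lemma exists_prim_root (F : finFieldType) (k : nat) :
  (k %| #|F|.-1)%N -> exists z : F, k.-primitive_root z.
Proof.
move=> k_dvd.
set units := enum (predC1 (0 : F)).
have size_units : size units = #|F|.-1 by rewrite -cardE (cardC1 (0 : F)).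
have q1_gt0 : (0 < #|F|.-1)%N.
  by rewrite -(cardC1 (0 : F)); apply/card_gt0P; exists 1; rewrite !inE oner_eq0.
have units_roots : all (#|F|.-1).-unity_root units.
  apply/allP => x; rewrite mem_enum /= => x_nz.
  rewrite unity_rootE; apply/eqP; apply: (mulfI x_nz).
  have q_gt0 : (0 < #|F|)%N by apply/card_gt0P; exists 0.
  by rewrite -exprS prednK // mulr1 expf_card.
have := has_prim_root q1_gt0 units_roots (enum_uniq _).
rewrite size_units leqnn => /(_ isT) /hasP [w _ w_prim].
by exists (w ^+ (#|F|.-1 %/ k)); exact: dvdn_prim_root.
Qed.

(* For a k-divisible map, multiplying x != 0 by the powers of a primitive
   k-th root of unity gives k distinct points of the fibre of x. *)
Lemma divisible_fibre_ge (F : finFieldType) (k : nat) (f : F -> F) (z : F) :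
  divisible k f -> k.-primitive_root z ->
  forall x : F, x != 0 -> (k <= npreim f (f x))%N.
Proof.
move=> [f' f_eq] z_prim x x_nz.
have orbit_in_fibre : [set z ^+ i * x | i : 'I_k] \subset [set y | f y == f x].
  apply/subsetP => y /imsetP [i _ ->]; rewrite inE !f_eq exprMn -exprM mulnC.
  by rewrite exprM (prim_expr_order z_prim) expr1n mul1r.
apply: leq_trans (subset_leq_card orbit_in_fibre).
rewrite card_imset ?card_ord // => i j /(mulIf x_nz) /eqP.
by rewrite (eq_prim_root_expr z_prim) !modn_small // => /eqP /val_inj.
Qed.

Lemma almost_k_to_1_of_fibres (F : finFieldType) (k : nat) (f : F -> F) :
  (1 < k)%N -> npreim f (f 0) = 1%N ->
  (forall x : F, x != 0 -> npreim f (f x) = k) -> almost_k_to_1 k f.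
Proof.
move=> k_gt1 fibre0 fibre_nz; exists (f 0); split=> [||y|y].
- exact: codom_f.
- exact: fibre0.
- case/codomP=> x ->; have [-> //|x_nz] := eqVneq x 0.
  by rewrite fibre_nz // => k_eq1; rewrite k_eq1 in k_gt1.
- case/codomP=> x ->; have [->|x_nz _] := eqVneq x 0; first by rewrite eqxx.
  exact: fibre_nz.
Qed.

Theorem theorem3p2 (F : finFieldType) (d : nat) (f : F -> F) :
  (d.+1 %| #|F|.-1)%N ->
  divisible d.+1 f ->
  diff_uniform d f ->
  almost_k_to_1 d.+1 f.
Proof.
move=> k_dvd f_div f_unif.
have [z z_prim] := exists_prim_root k_dvd.
have shift_le a : a != 0 -> (delta_count f a 0%R <= d)%N.
  by rewrite -f_unif; exact: delta_count_le_uniformity.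
have fibres := fibre_sizes_of_bounds shift_le (divisible_fibre_ge f_div z_prim).
apply: almost_k_to_1_of_fibres.
- by rewrite ltnS -f_unif diff_uniformity_gt0.
- by rewrite fibres eqxx.
- by move=> x x_nz; rewrite fibres x_nz.
Qed.
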